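(* Let $C$ be a matrix satisfying the dominance condition and let $C'$ be a submatrix of $C$ (obtained by selecting a subset of rows and a subset of columns) such that every column of $C'$ contains an entry equal to $1$ and every row of $C'$ contains at most one entry equal to $1$. Then, in each row of $C'$, the sum of the entries different from $1$ is less than $1$.
   Context: A matrix $C_1$ covers $C_2$ if $C_1-C_2$ is entrywise nonnegative. A matrix is columnwise normal if its entries lie in $[0,1]$ and every column has at least one entry equal to $1$. A columnwise normal matrix with $n$ rows satisfies the dominance condition if (a) there is an $n\times n$ submatrix (formed by $n$ of its columns) covering a permutation matrix, and (b) for every $n\times n$ such submatrix covering a permutation matrix, the sum of each row is less than $2$. *)

From mathcomp Require Import all_boot all_order all_algebra all_fingroup.
Set Implicit Arguments. Unset Strict Implicit. Unset Printing Implicit Defensive.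
Import Order.TTheory GRing.Theory Num.Theory.
Local Open Scope ring_scope.

Definition covers (R : numDomainType) m n (C1 C2 : 'M[R]_(m, n)) : Prop :=
  forall i j, 0 <= (C1 - C2) i j.

Definition columnwise_normal (R : numDomainType) m n (C : 'M[R]_(m, n)) : Prop :=
  (forall i j, 0 <= C i j <= 1) /\ (forall j, exists i, C i j = 1).

Definition covers_perm (R : numDomainType) n m (C : 'M[R]_(n, m)) (f : 'I_n -> 'I_m) : Prop :=
  injective f /\ exists s : 'S_n, covers (colsub f C) (perm_mx s).

Definition dominance (R : numDomainType) n m (C : 'M[R]_(n, m)) : Prop :=
  columnwise_normal C /\
  (exists f : 'I_n -> 'I_m, covers_perm C f) /\
  (forall f : 'I_n -> 'I_m, covers_perm C f ->
     forall i : 'I_n, \sum_(j < n) colsub f C i j < 2).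

From mathcomp Require Import all_boot all_order all_algebra all_fingroup.
Set Implicit Arguments. Unset Strict Implicit. Unset Printing Implicit Defensive.
Import Order.TTheory GRing.Theory Num.Theory.
Local Open Scope ring_scope.

(* Call a 1-transversal of C an injective choice of an entry equal to 1 in every row.
   Its columns form an n x n submatrix covering the identity, so by dominance every
   row of C sums to less than 2 over them. An exchange argument gives a 1-transversal
   whose columns include all columns of C'. A row of C' then contains a 1 inside C',
   or else its own transversal 1 lies outside C'; either way that 1 together with
   the entries of the row in C' different from 1 sums to less than 2. *)

Section Matching.

Variables (T U : finType) (e : T -> U -> bool).

Definition saturating (g : T -> U) : Prop := injective g /\ forall x, e x (g x).

Lemma saturating_cover (I : finType) (g0 : T -> U) (rho : I -> T) (col : I -> U) :
  saturating g0 -> injective rho -> (forall j, e (rho j) (col j)) ->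
  exists2 g, saturating g & forall j, col j \in codom g.
Proof.
move=> [g0_inj g0_e] rho_inj rho_e.
(* Maximise the number of j with g (rho j) = col j; since rho is injective, a missed
   col j0 can be assigned to rho j0 without undoing any other such j. *)
pose sat (g : {ffun T -> U}) := injectiveb g && [forall x, e x (g x)].
pose fixed (g : {ffun T -> U}) := [set j | g (rho j) == col j].
have sat_g0 : sat [ffun x => g0 x].
  by apply/andP; split; [apply/injectiveP => x y; rewrite !ffunE => /g0_inj
                        | apply/forallP => x; rewrite ffunE].
case: (arg_maxnP (fun g => #|fixed g|) sat_g0) => g /andP[/injectiveP g_inj /forallP g_e] g_max.
exists g => //; apply/forallP; apply: contraT; rewrite negb_forall => /existsP[j0 j0_free].
have not_fixed j : col j \notin codom g -> g (rho j) != col j.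
  by apply: contraNneq => <-; apply: codom_f.
pose g' := [ffun x => if x == rho j0 then col j0 else g x].
have sat_g' : sat g'.
  apply/andP; split; last by apply/forallP => x; rewrite ffunE; case: eqP => [->|].
  apply/injectiveP => x y; rewrite !ffunE.
  case: eqP => [->|_]; case: eqP => [->|_] //; last exact: g_inj.
    by move=> gy; case/negP: j0_free; rewrite gy codom_f.
  by move=> gx; case/negP: j0_free; rewrite -gx codom_f.
suff: (#|fixed g| < #|fixed g'|)%N by rewrite ltnNge; case/negP; apply: g_max.
apply/proper_card/properP; split.
  apply/subsetP => j; rewrite !inE ffunE => fixed_j.
  case: (rho j =P rho j0) => [/rho_inj ej|_ //]; subst j.
  by rewrite (negPf (not_fixed _ j0_free)) in fixed_j.
by exists j0; rewrite !inE ?ffunE ?eqxx // not_fixed.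
Qed.

End Matching.

Lemma sum_subset_le (R : numDomainType) (T : finType) (A B : {set T}) (F : T -> R) :
  (forall x, 0 <= F x) -> A \subset B -> \sum_(x in A) F x <= \sum_(x in B) F x.
Proof.
move=> F_ge0 AB; rewrite [X in _ <= X](big_setID A) (setIidPr AB) /=.
by rewrite lerDl sumr_ge0.
Qed.

Lemma sum_sub_codom_le (R : numDomainType) (T U : finType) (g : T -> U) (F : U -> R)
    (Y : {set U}) :
  injective g -> (forall y, 0 <= F y) -> Y \subset codom g ->
  \sum_(y in Y) F y <= \sum_x F (g x).
Proof.
move=> g_inj F_ge0 Yg.
have Y_img : Y \subset g @: setT.
  by apply/subsetP => y /(subsetP Yg)/codomP[x ->]; rewrite imset_f ?inE.
apply: le_trans (sum_subset_le F_ge0 Y_img) _.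
rewrite big_imset /=; last by move=> x y _ _ /g_inj.
by under eq_bigl do rewrite inE.
Qed.

Lemma sum_off_one_lt (R : numDomainType) (U : finType) (F : U -> R) (A : {set U}) y0 :
  F y0 = 1 -> (forall y, y \in A -> F y = 1 -> y = y0) ->
  \sum_(y in y0 |: A) F y < 2 -> \sum_(y in A | F y != 1) F y < 1.
Proof.
move=> F_y0 A_one; rewrite (bigD1 y0) ?setU11 //= F_y0.
rewrite -[2]/(1 + 1) ltrD2l; congr (_ < _); apply: eq_bigl => y; rewrite !inE.
case: eqP => [->|ne] /=; first by rewrite F_y0 eqxx !andbF.
by case Ay: (y \in A) => //=; apply/esym/eqP => /(A_one _ Ay).
Qed.

Section Dominance.

Variables (R : numDomainType) (n m : nat) (C : 'M[R]_(n, m)).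

Definition one_entry (i : 'I_n) (j : 'I_m) : bool := C i j == 1.

Lemma covers_perm_saturating f :
  (forall i j, C i j <= 1) -> covers_perm C f -> exists g, saturating one_entry g.
Proof.
move=> C_le1 [f_inj [s f_s]]; exists (f \o s); split; first exact: inj_comp f_inj perm_inj.
move=> x; rewrite /one_entry eq_le C_le1 /=.
by have := f_s x (s x); rewrite !mxE eqxx subr_ge0.
Qed.

Lemma saturating_covers_perm g :
  (forall i j, 0 <= C i j) -> saturating one_entry g -> covers_perm C g.
Proof.
move=> C_ge0 [g_inj g_one]; split=> //; exists 1%g => x y; rewrite !mxE perm1.
by case: eqP => [<-|_]; rewrite ?subr0 // (eqP (g_one x)) subrr.
Qed.

Hypothesis C_dom : dominance C.

Let C_ge0 i j : 0 <= C i j.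
Proof. by case: C_dom => [[C01 _] _]; case/andP: (C01 i j). Qed.

Let C_le1 i j : C i j <= 1.
Proof. by case: C_dom => [[C01 _] _]; case/andP: (C01 i j). Qed.

Lemma dominance_saturating : exists g, saturating one_entry g.
Proof. by case: C_dom => _ [[f f_perm] _]; exact: covers_perm_saturating C_le1 f_perm. Qed.

Lemma dominance_sum_codom_lt2 g x (Y : {set 'I_m}) :
  saturating one_entry g -> Y \subset codom g -> \sum_(y in Y) C x y < 2.
Proof.
move=> g_sat Yg; case: C_dom => _ [_ row_lt2].
apply: le_lt_trans (row_lt2 g (saturating_covers_perm C_ge0 g_sat) x).
under [X in _ <= X]eq_bigr do rewrite mxE.
exact: sum_sub_codom_le g_sat.1 (C_ge0 x) Yg.
Qed.

Lemma dominance_sum_off_one_lt g x (A : {set 'I_m}) :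
  saturating one_entry g -> A \subset codom g ->
  {in A &, forall y1 y2, C x y1 = 1 -> C x y2 = 1 -> y1 = y2} ->
  \sum_(y in A | C x y != 1) C x y < 1.
Proof.
move=> g_sat Ag A_uniq.
have [y0 [y0_g y0_one y0_uniq]] : exists y0, [/\ y0 \in codom g, C x y0 = 1
    & forall y, y \in A -> C x y = 1 -> y = y0].
  case: (boolP [exists y in A, C x y == 1]) => [/exists_inP[y1 A_y1 /eqP one_y1] | no_one].
    by exists y1; split=> // [|y A_y one_y]; [exact: (subsetP Ag) | exact: A_uniq].
  exists (g x); split; [exact: codom_f | exact/eqP/(g_sat.2 x) | ].
  by move=> y A_y one_y; case/exists_inP: no_one; exists y => //; apply/eqP.
apply: sum_off_one_lt y0_one y0_uniq _; apply: dominance_sum_codom_lt2 g_sat _.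
by apply/subsetP => y; rewrite !inE => /orP[/eqP -> // | /(subsetP Ag)].
Qed.

End Dominance.

Theorem lemma4p7 (R : realFieldType) (n m p q : nat) (C : 'M[R]_(n, m))
  (r : 'I_p -> 'I_n) (c : 'I_q -> 'I_m) :
  dominance C -> injective r -> injective c ->
  (forall j : 'I_q, exists i : 'I_p, mxsub r c C i j = 1) ->
  (forall (i : 'I_p) (j1 j2 : 'I_q),
      mxsub r c C i j1 = 1 -> mxsub r c C i j2 = 1 -> j1 = j2) ->
  forall i : 'I_p, \sum_(j < q | mxsub r c C i j != 1) mxsub r c C i j < 1.
Proof.
move=> C_dom r_inj c_inj col_one row_one i.
have [rho rho_one] := fin_all_exists col_one.
have [g0 g0_sat] := dominance_saturating C_dom.
have [g g_sat g_cover] : exists2 g, saturating (one_entry C) g & forall j, c j \in codom g.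
  apply: (saturating_cover g0_sat (rho := r \o rho)).
    by move=> j1 j2 /r_inj e; apply: (row_one (rho j1)); rewrite // e.
  by move=> j; have := rho_one j; rewrite mxE /one_entry /= => ->.
under eq_bigr do rewrite mxE; under eq_bigl do rewrite mxE.
have -> : \sum_(j | C (r i) (c j) != 1) C (r i) (c j) =
          \sum_(y in c @: setT | C (r i) y != 1) C (r i) y.
  rewrite big_imset_cond /=; last by move=> j1 j2 _ _ /c_inj.
  by apply: eq_bigl => j; rewrite inE.
apply: (dominance_sum_off_one_lt C_dom g_sat).
  by apply/subsetP => _ /imsetP[j _ ->].
move=> _ _ /imsetP[j1 _ ->] /imsetP[j2 _ ->] one_j1 one_j2; congr c.
by apply: (row_one i); rewrite mxE.
Qed.
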